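(* Let $F$ be an algebraically closed field of characteristic $\neq 2$, $R=F[t]$ with the involution ${}^*$ described in the context. Let $A,B\in M_2(R)$ be skew-hermitian with $\gcd(A)=\gcd(B)=1$ and $\det(A)=\det(B)\neq 0$. Then $A$ and $B$ are congruent.
   Context: $R=F[t]$ is the polynomial ring over $F$, and ${}^*$ is the $F$-algebra involution of $R$ that is the identity on $F$ and sends $t$ to $-t$. For $A=(a_{ij})\in M_n(R)$, $A^*$ is the matrix whose $(i,j)$ entry is $a_{ji}^*$; $A$ is skew-hermitian if $A^*=-A$. Congruence: $B=S^*AS$ for some $S\in\mathrm{GL}_n(R)$. $\gcd(A)$ denotes the monic generator (or $0$) of the ideal generated by all entries of $A$. *)

From HB Require Import structures.
From mathcomp Require Import all_boot all_order all_algebra.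
Set Implicit Arguments. Unset Strict Implicit. Unset Printing Implicit Defensive.
Import GRing.Theory.
Local Open Scope ring_scope.

Definition pstar (F : fieldType) (p : {poly F}) : {poly F} := p \Po (- 'X).

Definition mxstar (F : fieldType) (m n : nat) (A : 'M[{poly F}]_(m, n))
  : 'M[{poly F}]_(n, m) := \matrix_(i, j) pstar (A j i).

Definition skew_hermitian (F : fieldType) (n : nat) (A : 'M[{poly F}]_n) : Prop :=
  mxstar A = - A.

(* gcd(A) = 1 : the ideal of R generated by all entries of A is R itself,
   i.e. 1 is an R-linear combination of the entries of A. *)
Definition gcd_mx_is_one (F : fieldType) (m n : nat) (A : 'M[{poly F}]_(m, n)) : Prop :=
  exists c : 'M[{poly F}]_(m, n), \sum_(i < m) \sum_(j < n) c i j * A i j = 1.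

Definition congruent (F : fieldType) (n : nat) (A B : 'M[{poly F}]_n) : Prop :=
  exists2 S : 'M[{poly F}]_n, S \in unitmx & B = mxstar S *m A *m S.

From HB Require Import structures.
From mathcomp Require Import all_boot all_order all_algebra.
From mathcomp Require Import ring.
Set Implicit Arguments. Unset Strict Implicit. Unset Printing Implicit Defensive.
Import GRing.Theory.
Local Open Scope ring_scope.

(* Every skew-hermitian A with gcd(A) = 1 and det A <> 0 is congruent, by a
   matrix of determinant 1, to a normal form [t, beta; -beta, delta] with
   beta in F.  Comparing determinants shows that the normal form is
   determined by det A up to the sign of beta, and diag(1, -1) flips that
   sign.  To reach the normal form, first shear A so that its corner entry a
   vanishes at no root of det A (possible since F is infinite and the entries
   of A have no common root).  As det A is *-invariant and does not vanish at 0,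
   it factors as c c^* with c, c^* coprime; the column ((c - b)/g, a/g) with
   g = gcd(c - b, a) is then isotropic for A, and completing it to a basis
   kills the corner while making the new entry b coprime to b^*.  A Bezout
   relation for b, b^* then turns the corner into t, and a last shear makes
   b constant. *)

Section Involution.
Variable F : fieldType.
Implicit Types (p : {poly F}) (x : F).

Fact pstar_is_zmod_morphism : zmod_morphism (@pstar F).
Proof. exact: raddfB. Qed.

Fact pstar_is_monoid_morphism : monoid_morphism (@pstar F).
Proof. exact: rmorphism_monoidP. Qed.

HB.instance Definition _ := GRing.isZmodMorphism.Build _ _ (@pstar F) pstar_is_zmod_morphism.
HB.instance Definition _ :=
  GRing.isMonoidMorphism.Build _ _ (@pstar F) pstar_is_monoid_morphism.

Lemma pstarX : pstar 'X = - 'X :> {poly F}.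
Proof. exact: comp_polyX. Qed.

Lemma pstarC x : pstar x%:P = x%:P.
Proof. exact: comp_polyC. Qed.

Lemma horner_pstar p x : (pstar p).[x] = p.[- x].
Proof. by rewrite horner_comp hornerN hornerX. Qed.

Lemma root_pstar p x : root (pstar p) x = root p (- x).
Proof. by rewrite /root horner_pstar. Qed.

Lemma pstarK : involutive (@pstar F).
Proof.
have XK : pstar (- 'X) = 'X :> {poly F} by rewrite rmorphN /= pstarX opprK.
by move=> p; rewrite /pstar -comp_polyA -/(pstar (- 'X)) XK comp_polyXr.
Qed.

Lemma pstar_eq0 p : (pstar p == 0) = (p == 0).
Proof. exact/raddf_eq0/(can_inj pstarK). Qed.

Lemma mxstarE m n (A : 'M[{poly F}]_(m, n)) : mxstar A = (map_mx (@pstar F) A)^T.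
Proof. by apply/matrixP => i j; rewrite !mxE. Qed.

Lemma mxstarM m n k (A : 'M[{poly F}]_(m, n)) (B : 'M_(n, k)) :
  mxstar (A *m B) = mxstar B *m mxstar A.
Proof. by rewrite !mxstarE map_mxM trmx_mul. Qed.

Lemma mxstarK m n (A : 'M[{poly F}]_(m, n)) : mxstar (mxstar A) = A.
Proof. by apply/matrixP => i j; rewrite !mxE pstarK. Qed.

Lemma mxstar1 n : mxstar (1%:M : 'M[{poly F}]_n) = 1%:M.
Proof. by rewrite mxstarE map_mx1 trmx1. Qed.

Lemma det_mxstar n (A : 'M[{poly F}]_n) : \det (mxstar A) = pstar (\det A).
Proof. by rewrite mxstarE det_tr det_map_mx. Qed.

End Involution.

Section Congruence.
Variables (F : fieldType) (n : nat).
Implicit Types A B C : 'M[{poly F}]_n.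

Definition sl_congruent A B := exists2 S : 'M_n, \det S = 1 & B = mxstar S *m A *m S.

Lemma sl_congruent_refl A : sl_congruent A A.
Proof. by exists 1%:M; rewrite ?det1 // mxstar1 mul1mx mulmx1. Qed.

Lemma sl_congruent_trans A B C : sl_congruent A B -> sl_congruent B C -> sl_congruent A C.
Proof.
move=> [S dS ->] [T dT ->]; exists (S *m T); first by rewrite det_mulmx dS dT mulr1.
by rewrite mxstarM !mulmxA.
Qed.

Lemma det_sl_congruent A B : sl_congruent A B -> \det B = \det A.
Proof. by move=> [S dS ->]; rewrite !det_mulmx det_mxstar dS rmorph1 mul1r mulr1. Qed.

Lemma sl_congruent_skew A B : skew_hermitian A -> sl_congruent A B -> skew_hermitian B.
Proof.
by rewrite /skew_hermitian => sA [S _ ->]; rewrite !mxstarM mxstarK sA mulNmx mulmxN mulmxA.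
Qed.

Lemma sl_congruent_congruent A B : sl_congruent A B -> congruent A B.
Proof. by move=> [S dS ->]; exists S; rewrite // unitmxE dS unitr1. Qed.

Lemma congruent_refl A : congruent A A.
Proof. exact/sl_congruent_congruent/sl_congruent_refl. Qed.

Lemma congruent_trans A B C : congruent A B -> congruent B C -> congruent A C.
Proof.
move=> [S uS ->] [T uT ->]; exists (S *m T); first by rewrite unitmx_mul uS.
by rewrite mxstarM !mulmxA.
Qed.

Lemma congruent_sym A B : congruent A B -> congruent B A.
Proof.
move=> [S uS ->]; exists (invmx S); first by rewrite unitmx_inv.
by rewrite mulmxA mulmxK // mulmxA -mxstarM mulmxV // mxstar1 mul1mx.
Qed.

End Congruence.

Lemma gcd_mx_is_one_common_root (F : fieldType) m n (A : 'M[{poly F}]_(m, n)) z :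
  gcd_mx_is_one A -> ~ (forall i j, root (A i j) z).
Proof.
move=> [c /(congr1 (horner^~ z))] + A_z; rewrite hornerC horner_sum big1 => [/eqP|i _].
  by rewrite eq_sym oner_eq0.
by rewrite horner_sum big1 // => j _; rewrite hornerM (eqP (A_z i j)) mulr0.
Qed.

Definition mx2 (R : Type) (a b c d : R) : 'M[R]_2 :=
  \matrix_(i, j) if i == 0 then if j == 0 then a else b else if j == 0 then c else d.

Lemma mx2E (R : Type) (a b c d : R) :
  [/\ mx2 a b c d 0 0 = a, mx2 a b c d 0 1 = b, mx2 a b c d 1 0 = c & mx2 a b c d 1 1 = d].
Proof. by rewrite !mxE. Qed.

Lemma ord2P (i : 'I_2) : i = 0 \/ i = 1.
Proof. by case: i => [[|[|//]] lti]; [left | right]; apply: val_inj. Qed.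

Lemma mx2_eta (R : Type) (M : 'M[R]_2) : M = mx2 (M 0 0) (M 0 1) (M 1 0) (M 1 1).
Proof. by apply/matrixP => i j; rewrite mxE; case: (ord2P i) => ->; case: (ord2P j) => ->. Qed.

Lemma sum_ord2 (V : nmodType) (f : 'I_2 -> V) : \sum_i f i = f 0 + f 1.
Proof. by rewrite big_ord_recl big_ord1; congr (_ + f _); apply: val_inj. Qed.

Lemma det_mx2 (R : comRingType) (M : 'M[R]_2) : \det M = M 0 0 * M 1 1 - M 0 1 * M 1 0.
Proof.
rewrite (expand_det_row _ 0) sum_ord2 /cofactor !det_mx11 !mxE.
have -> : lift 0 ord0 = 1 :> 'I_2 by apply: val_inj.
have -> : lift 1 ord0 = 0 :> 'I_2 by apply: val_inj.
by rewrite expr0 expr1 !mul1r mulN1r mulrN.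
Qed.

Section SkewTwoByTwo.
Variable F : fieldType.
Implicit Types (A S : 'M[{poly F}]_2).

Lemma mx2_congrE S A i j :
  (mxstar S *m A *m S) i j =
  pstar (S 0 i) * (A 0 0 * S 0 j + A 0 1 * S 1 j) +
  pstar (S 1 i) * (A 1 0 * S 0 j + A 1 1 * S 1 j).
Proof. by rewrite !mxE sum_ord2 !mxE !sum_ord2 !mxE; ring. Qed.

Lemma skew_mx2P A : skew_hermitian A ->
  [/\ pstar (A 0 0) = - A 0 0, pstar (A 1 1) = - A 1 1 & A 1 0 = - pstar (A 0 1)].
Proof.
move=> /matrixP sA; have entry i j : pstar (A j i) = - A i j.
  by move: (sA i j); rewrite !mxE.
by split; rewrite ?entry ?opprK.
Qed.

Lemma det_skew_mx2 A : skew_hermitian A -> \det A = A 0 0 * A 1 1 + A 0 1 * pstar (A 0 1).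
Proof. by move=> /skew_mx2P[_ _ A10]; rewrite det_mx2 A10 mulrN opprK. Qed.

Lemma pstar_det_skew_mx2 A : skew_hermitian A -> pstar (\det A) = \det A.
Proof.
move=> sA; have [A00 A11 _] := skew_mx2P sA.
by rewrite det_skew_mx2 // rmorphD !rmorphM /= A00 A11 pstarK; ring.
Qed.

Lemma sl_congruent_isotropic A (v1 v2 : {poly F}) : coprimep v1 v2 ->
  pstar v1 * (A 0 0 * v1 + A 0 1 * v2) + pstar v2 * (A 1 0 * v1 + A 1 1 * v2) = 0 ->
  exists2 B, sl_congruent A B &
    B 0 0 = 0 /\ pstar v1 * A 0 0 + pstar v2 * A 1 0 = - (v2 * B 0 1).
Proof.
move=> /Bezout_eq1_coprimepP[[u1 u2] /= bezout] isotropic.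
pose S := mx2 v1 (- u2) v2 u1; have [S00 S01 S10 S11] := mx2E v1 (- u2) v2 u1.
exists (mxstar S *m A *m S).
  by exists S; rewrite // det_mx2 S00 S01 S10 S11 -bezout; ring.
rewrite !mx2_congrE S00 S01 S10 S11; split=> //; apply/eqP; rewrite -addr_eq0.
set a := A 0 0 in isotropic *; set b := A 0 1 in isotropic *.
set c := A 1 0 in isotropic *; set d := A 1 1 in isotropic *.
set p1 := pstar v1 * a + pstar v2 * c.
have -> : p1 + v2 * (pstar v1 * (a * - u2 + b * u1) + pstar v2 * (c * - u2 + d * u1))
    = p1 * (1 - (u1 * v1 + u2 * v2)) +
      u1 * (pstar v1 * (a * v1 + b * v2) + pstar v2 * (c * v1 + d * v2)).
  by rewrite /p1; ring.
by rewrite bezout isotropic subrr !mulr0 addr0.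
Qed.

Lemma skew_sl_congruent_corner0 A c : skew_hermitian A -> \det A = c * pstar c ->
  exists2 B, sl_congruent A B & B 0 0 = 0 /\ B 0 1 %| pstar c * A 0 0.
Proof.
move=> sA detA; have [A00 _ A10] := skew_mx2P sA.
have [a0 | a_neq0] := eqVneq (A 0 0) 0.
  by exists A; [apply: sl_congruent_refl | rewrite a0 mulr0 dvdp0].
set a := A 0 0 in A00 a_neq0 *; set b := A 0 1 in A10 *.
pose g := gcdp (c - b) a.
have g_neq0 : g != 0 by rewrite gcdp_eq0 negb_and a_neq0 orbT.
have v1g : (c - b) %/ g * g = c - b by rewrite divpK ?dvdp_gcdl.
have v2g : a %/ g * g = a by rewrite divpK ?dvdp_gcdr.
have cop : coprimep ((c - b) %/ g) (a %/ g) by rewrite coprimep_div_gcd // a_neq0 orbT.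
have [|B cAB [B00 B01]] := sl_congruent_isotropic (A := A) cop.
  apply: (mulIf (_ : g * pstar g != 0)); first by rewrite mulf_eq0 pstar_eq0 orbb.
  rewrite -/a -/b mul0r; set v1 := (c - b) %/ g in v1g *; set v2 := a %/ g in v2g *.
  transitivity (pstar (v1 * g) * (a * (v1 * g) + b * (v2 * g)) +
                pstar (v2 * g) * (A 1 0 * (v1 * g) + A 1 1 * (v2 * g))).
    by rewrite !rmorphM /=; ring.
  rewrite v1g v2g rmorphB /= A00 A10.
  transitivity (a * (c * pstar c - (a * A 1 1 + b * pstar b))); first by ring.
  by rewrite -detA det_skew_mx2 // subrr mulr0.
exists B => //; split=> //.
suff -> : pstar c * a = - (pstar g * (a %/ g)) * B 0 1 by apply: dvdp_mulIr.
rewrite mulNr -mulrA -mulrN -B01 -/a.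
transitivity (pstar ((c - b) %/ g * g) * a + pstar (a %/ g * g) * A 1 0).
  by rewrite v1g v2g rmorphB /= A00 A10; ring.
by rewrite !rmorphM /=; ring.
Qed.

Definition skew_normal_form (beta : F) (delta : {poly F}) : 'M[{poly F}]_2 :=
  mx2 'X beta%:P (- beta%:P) delta.

Lemma det_skew_normal_form beta delta :
  \det (skew_normal_form beta delta) = 'X * delta + (beta ^+ 2)%:P.
Proof.
have [N00 N01 N10 N11] := mx2E 'X beta%:P (- beta%:P) delta.
by rewrite det_mx2 N00 N01 N10 N11 rmorphXn /=; ring.
Qed.

Lemma skew_sl_congruent_normal_form_cornerX A : skew_hermitian A -> A 0 0 = 'X ->
  exists delta, sl_congruent A (skew_normal_form (A 0 1).[0] delta).
Proof.
move=> sA a_X; set b := A 0 1.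
have /factor_theorem[q bE] : root (b - b.[0]%:P) 0 by rewrite /root !hornerE subrr.
pose S := mx2 1 (- q) 0 1; have [S00 S01 S10 S11] := mx2E 1 (- q) 0 1.
have cAB : sl_congruent A (mxstar S *m A *m S).
  by exists S; rewrite // det_mx2 S00 S01 S10 S11; ring.
set B := mxstar S *m A *m S in cAB *.
have [_ _ B10] := skew_mx2P (sl_congruent_skew sA cAB).
have B00 : B 0 0 = 'X by rewrite mx2_congrE S00 S10 rmorph1 rmorph0 /= a_X; ring.
have B01 : B 0 1 = b.[0]%:P.
  rewrite mx2_congrE S00 S01 S10 S11 rmorph1 rmorph0 /= a_X -/b.
  apply/eqP; rewrite -subr_eq0; apply/eqP; rewrite polyC0 subr0 in bE.
  by transitivity (b - b.[0]%:P - q * 'X); [ring | rewrite bE subrr].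
exists (B 1 1); suff -> : skew_normal_form b.[0] (B 1 1) = B by [].
by rewrite [RHS]mx2_eta B10 B00 B01 pstarC.
Qed.

Lemma congruent_skew_normal_form beta1 beta2 delta1 delta2 :
  \det (skew_normal_form beta1 delta1) = \det (skew_normal_form beta2 delta2) ->
  congruent (skew_normal_form beta1 delta1) (skew_normal_form beta2 delta2).
Proof.
rewrite !det_skew_normal_form => eq_det.
have eq_sq : beta1 ^+ 2 = beta2 ^+ 2.
  by have := congr1 (horner^~ 0) eq_det; rewrite !hornerE.
have <- : delta1 = delta2.
  by apply: (mulfI (negbT (polyX_eq0 F))); apply: (addIr (beta1 ^+ 2)%:P); rewrite eq_det eq_sq.
move/eqP: eq_sq; rewrite eqf_sqr => /orP[/eqP-> | /eqP->]; first exact: congruent_refl.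
pose D := mx2 1 0 0 (-1) : 'M[{poly F}]_2.
have [D00 D01 D10 D11] := mx2E (1 : {poly F}) 0 0 (-1).
exists D; first by rewrite unitmxE det_mx2 D00 D01 D10 D11 mulr0 subr0 mulrN1 unitrN unitr1.
have [N00 N01 N10 N11] := mx2E 'X (- beta2)%:P (- (- beta2)%:P) delta1.
rewrite /skew_normal_form [RHS]mx2_eta !mx2_congrE D00 D01 D10 D11 N00 N01 N10 N11.
by rewrite rmorph0 rmorph1 rmorphN1 polyCN; congr mx2; ring.
Qed.

End SkewTwoByTwo.

Section OddCharacteristic.
Variable F : fieldType.
Hypothesis two_neq0 : (2%:R : F) != 0.
Implicit Types (A : 'M[{poly F}]_2) (p : {poly F}) (x : F).

Lemma oppr_eq_id x : (- x == x) = (x == 0).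
Proof. by rewrite eqr_oppLR -subr_eq0 opprK -mulr2n -mulr_natr mulf_eq0 (negPf two_neq0) orbF. Qed.

Lemma skew_poly_root0 p : pstar p = - p -> root p 0.
Proof.
by move=> /(congr1 (horner^~ 0)) /= /eqP; rewrite horner_pstar oppr0 hornerN eq_sym oppr_eq_id.
Qed.

Lemma skew_mx2_det_nonroot0 A : skew_hermitian A -> gcd_mx_is_one A -> ~~ root (\det A) 0.
Proof.
move=> sA gA; have [A00 A11 A10] := skew_mx2P sA.
have a0 := skew_poly_root0 A00; have d0 := skew_poly_root0 A11.
apply/negP => det0; apply: (gcd_mx_is_one_common_root (z := 0) gA).
have b0 : root (A 0 1) 0.
  move: det0; rewrite /root det_skew_mx2 // hornerD !hornerM (eqP a0) mul0r add0r.
  by rewrite horner_pstar oppr0 mulf_eq0 orbb.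
have c0 : root (A 1 0) 0 by rewrite A10 /root hornerN horner_pstar oppr0 (eqP b0) oppr0.
by move=> i j; case: (ord2P i) => ->; case: (ord2P j) => ->.
Qed.

Lemma pstar_fixed_factor (d : {poly F}) (r : F) : pstar d = d -> root d r -> r != 0 ->
  exists2 q, d = q * ('X^2 - (r ^+ 2)%:P) & pstar q = q.
Proof.
move=> d_sym dr r_neq0.
have XrE : ('X - r%:P) * ('X - (- r)%:P) = 'X^2 - (r ^+ 2)%:P by rewrite polyCN rmorphXn; ring.
set p2 := 'X^2 - _ in XrE *.
have p2_neq0 : p2 != 0 by rewrite -XrE mulf_eq0 !polyXsubC_eq0.
have p2_sym : pstar p2 = p2 by rewrite rmorphB rmorphXn /= pstarX pstarC sqrrN.
have p2_dvd : p2 %| d.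
  rewrite -XrE Gauss_dvdp ?coprimep_XsubC ?root_XsubC ?oppr_eq_id // !dvdp_XsubCl dr /=.
  by rewrite -d_sym root_pstar opprK.
exists (d %/ p2); first by rewrite divpK.
by apply: (mulIf p2_neq0); rewrite /= -{2}p2_sym -rmorphM divpK // d_sym.
Qed.

Lemma skew_sl_congruent_cornerX A : skew_hermitian A -> A 0 0 = 0 ->
  coprimep (A 0 1) (pstar (A 0 1)) -> exists2 B, sl_congruent A B & B 0 0 = 'X.
Proof.
move=> sA a0 /Bezout_eq1_coprimepP[[u w] /= bezout]; have [_ A11 A10] := skew_mx2P sA.
set b := A 0 1 in bezout A10 *; set d := A 1 1 in A11 *.
have bezout' : pstar u * pstar b + pstar w * b = 1.
  by have := congr1 (@pstar F) bezout; rewrite rmorphD !rmorphM rmorph1 /= pstarK.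
pose e := 'X - d.
have e_skew : pstar e = - e by rewrite rmorphB /= pstarX A11 /e; ring.
(* Symmetrising e = e (u b + w b^* ) gives x^* b - b^* x = e for this x. *)
pose x := (2^-1 : F)%:P * (pstar (u * e) - w * e).
pose S := mx2 x (-1) 1 0; have [S00 S01 S10 S11] := mx2E x (-1) 1 0.
exists (mxstar S *m A *m S); first by exists S; rewrite // det_mx2 S00 S01 S10 S11; ring.
rewrite mx2_congrE S00 S10 a0 A10 rmorph1 /x rmorphM rmorphB !rmorphM /=.
rewrite pstarC !pstarK e_skew -/b -/d.
have half : (2^-1 : F)%:P * 2%:R = 1 by rewrite -polyC_natr -polyCM mulVf.
transitivity ((2^-1 : F)%:P * 2%:R * e + d); last by rewrite half mul1r subrK.
transitivity ((2^-1 : F)%:P * e * ((u * b + w * pstar b) + (pstar u * pstar b + pstar w * b)) + d).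
  by ring.
by rewrite bezout bezout'; ring.
Qed.

End OddCharacteristic.

Section ClosedField.
Variable F : closedFieldType.
Hypothesis two_neq0 : (2%:R : F) != 0.
Implicit Types (A : 'M[{poly F}]_2) (p : {poly F}).

Lemma closed_sqrt (k : F) : exists s, s ^+ 2 = k.
Proof.
have /closed_rootP[s] : size ('X^2 - k%:P) != 1 by rewrite size_XnsubC.
by rewrite /root !hornerE subr_eq0 => /eqP; exists s.
Qed.

Lemma coprimep_pstarP p :
  reflect (forall x, root p x -> ~~ root p (- x)) (coprimep p (pstar p)).
Proof.
apply: (iffP idP) => [cop x px | no_pair].
  by have := coprimep_root cop px; rewrite horner_pstar.
by apply: Pdiv.ClosedField.root_coprimep => x /no_pair; rewrite horner_pstar.
Qed.

Lemma coprimep_pstar_mulXsubC (c : {poly F}) (r : F) : r != 0 -> ~~ root c (- r) ->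
  coprimep c (pstar c) -> coprimep (('X - r%:P) * c) (pstar (('X - r%:P) * c)).
Proof.
move=> r_neq0 cr /coprimep_pstarP cop; apply/coprimep_pstarP => x.
rewrite !rootM !root_XsubC negb_or => /orP[/eqP-> | cx].
  by rewrite oppr_eq_id // r_neq0 cr.
by rewrite cop // andbT; apply: contraNneq cr => <-; rewrite opprK.
Qed.

Lemma pstar_fixed_norm (d : {poly F}) : d != 0 -> pstar d = d -> ~~ root d 0 ->
  exists2 c, c * pstar c = d & coprimep c (pstar c).
Proof.
have [n] := ubnP (size d); elim: n d => // n IH d size_d d_neq0 d_sym d0.
have [/eqP/size_poly1P[k k_neq0 ->] | /closed_rootP[r dr]] := eqVneq (size d) 1.
  have [s s2] := closed_sqrt k.
  exists s%:P; first by rewrite pstarC -polyCM -expr2 s2.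
  apply/coprimep_pstarP => x; rewrite rootC => /eqP s0.
  by move: k_neq0; rewrite -s2 s0 expr0n eqxx.
have r_neq0 : r != 0 by apply: contraNneq d0 => <-.
have [q dE q_sym] := pstar_fixed_factor two_neq0 d_sym dr r_neq0.
have q_neq0 : q != 0 by apply: contraNneq d_neq0 => q0; rewrite dE q0 mul0r.
(* As (X - rho) (X - rho)^* = -(X^2 - rho^2), the induction is applied to -q, and the
   sign of rho = +-r is chosen so that c2 does not vanish at -rho. *)
have [c2 c2E cop2] : exists2 c2, c2 * pstar c2 = - q & coprimep c2 (pstar c2).
  apply: IH; rewrite ?oppr_eq0 ?rmorphN /= ?q_sym ?rootN //.
    move: size_d; rewrite size_opp dE size_mul ?size_XnsubC //.
      by rewrite addn3 ltnS => /ltnW.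
    by rewrite -size_poly_eq0 size_XnsubC.
  by move: d0; rewrite dE rootM negb_or => /andP[].
have [rho rho2 c2rho] : exists2 rho, rho ^+ 2 = r ^+ 2 & ~~ root c2 (- rho).
  have [c2r | c2r] := boolP (root c2 (- r)); last by exists r.
  exists (- r); first by rewrite sqrrN.
  by rewrite opprK; move/coprimep_pstarP: cop2 => /(_ _ c2r); rewrite opprK.
exists (('X - rho%:P) * c2).
  rewrite rmorphM rmorphB /= pstarX pstarC dE.
  transitivity (('X^2 - rho%:P ^+ 2) * - (c2 * pstar c2)); first by ring.
  by rewrite c2E opprK -rmorphXn rho2 mulrC.
apply: coprimep_pstar_mulXsubC => //.
by apply: contraNneq r_neq0 => rho0; rewrite -sqrf_eq0 -rho2 rho0 expr0n.
Qed.

Lemma skew_sl_congruent_corner_nonroot A :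
  skew_hermitian A -> gcd_mx_is_one A -> \det A != 0 ->
  exists2 B, sl_congruent A B & forall r, root (\det A) r -> ~~ root (B 0 0) r.
Proof.
move=> sA gA det_neq0; have [_ _ A10] := skew_mx2P sA.
have [rs detE] := closed_field_poly_normal (\det A).
have root_det z : root (\det A) z = (z \in rs).
  by rewrite {1}detE rootZ ?lead_coef_eq0 // root_prod_XsubC.
(* (Q z).[lambda] is the corner of the shear of A by lambda, evaluated at z. *)
pose Q z : {poly F} :=
  Poly [:: (A 0 0).[z]; (A 0 1).[z] - (pstar (A 0 1)).[z]; (A 1 1).[z]].
have Q_neq0 z : root (\det A) z -> Q z != 0.
  move=> det_z; apply/negP => /eqP Qz; have coefQ i : (Q z)`_i = 0 by rewrite Qz coef0.
  move: (coefQ 0%N) (coefQ 1%N) (coefQ 2%N); rewrite !coef_Poly /= => a_z /eqP.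
  rewrite subr_eq0 => /eqP b_z d_z.
  have b_z0 : (A 0 1).[z] = 0.
    move: det_z; rewrite /root det_skew_mx2 // hornerD !hornerM a_z d_z mul0r add0r -b_z.
    by rewrite mulf_eq0 orbb => /eqP.
  have c_z : root (A 1 0) z by rewrite A10 /root hornerN -b_z b_z0 oppr0.
  apply: (gcd_mx_is_one_common_root (z := z) gA) => i j; rewrite /root.
  by case: (ord2P i) => ->; case: (ord2P j) => ->; rewrite ?a_z ?b_z0 ?d_z.
have /closed_nonrootP[lambda] : \prod_(z <- rs) Q z != 0.
  by rewrite prodf_seq_neq0; apply/allP => z; rewrite -root_det => /Q_neq0.
rewrite /root horner_prod prodf_seq_neq0 => /allP nonroot.
pose S := mx2 1 0 lambda%:P 1; have [S00 S01 S10 S11] := mx2E 1 0 lambda%:P 1.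
exists (mxstar S *m A *m S); first by exists S; rewrite // det_mx2 S00 S01 S10 S11; ring.
move=> r det_r; move: (nonroot r); rewrite -root_det => /(_ det_r).
rewrite mx2_congrE S00 S10 rmorph1 pstarC A10 /root horner_Poly !hornerE; cbn [horner_rec].
by apply: contra_neq => eq0; apply: eq_trans eq0; ring.
Qed.

Lemma skew_sl_congruent_corner0_coprime A c : skew_hermitian A ->
  \det A = c * pstar c -> coprimep c (pstar c) ->
  (forall r, root (\det A) r -> ~~ root (A 0 0) r) ->
  exists2 B, sl_congruent A B & B 0 0 = 0 /\ coprimep (B 0 1) (pstar (B 0 1)).
Proof.
move=> sA detA /coprimep_pstarP cop a_nonroot.
have [B cAB [B00 B01_dvd]] := skew_sl_congruent_corner0 sA detA.
exists B => //; split=> //.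
have detB : \det A = B 0 1 * pstar (B 0 1).
  rewrite -(det_sl_congruent cAB) det_skew_mx2 ?B00 ?mul0r ?add0r //.
  exact: sl_congruent_skew sA cAB.
have c_root y : root (B 0 1) y -> root c (- y).
  move=> By; have det_y : root (\det A) y by rewrite detB rootM By.
  have := root_dvdp B01_dvd By; rewrite rootM root_pstar.
  by rewrite (negPf (a_nonroot y det_y)) orbF.
apply/coprimep_pstarP => x /c_root cx; apply/negP => /c_root; apply/negP.
exact: cop cx.
Qed.

Lemma skew_sl_congruent_normal_form A :
  skew_hermitian A -> gcd_mx_is_one A -> \det A != 0 ->
  exists beta delta, sl_congruent A (skew_normal_form beta delta).
Proof.
move=> sA gA det_neq0.
have [A1 cA1 a1_nonroot] := skew_sl_congruent_corner_nonroot sA gA det_neq0.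
have [c detE cop] := pstar_fixed_norm det_neq0 (pstar_det_skew_mx2 sA)
  (skew_mx2_det_nonroot0 two_neq0 sA gA).
have sA1 := sl_congruent_skew sA cA1; rewrite -(det_sl_congruent cA1) in detE a1_nonroot.
have [A2 cA2 [A2_00 cop2]] := skew_sl_congruent_corner0_coprime sA1 (esym detE) cop a1_nonroot.
have sA2 := sl_congruent_skew sA1 cA2.
have [A3 cA3 A3_00] := skew_sl_congruent_cornerX two_neq0 sA2 A2_00 cop2.
have [delta cA4] := skew_sl_congruent_normal_form_cornerX (sl_congruent_skew sA2 cA3) A3_00.
exists (A3 0 1).[0], delta.
by apply: sl_congruent_trans cA1 (sl_congruent_trans cA2 (sl_congruent_trans cA3 cA4)).
Qed.

End ClosedField.

Theorem lemma4p4 (F : closedFieldType) (hchar : (2%:R : F) != 0)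
  (A B : 'M[{poly F}]_2) :
  skew_hermitian A -> skew_hermitian B ->
  gcd_mx_is_one A -> gcd_mx_is_one B ->
  \det A = \det B -> \det A != 0 ->
  congruent A B.
Proof.
move=> sA sB gA gB detAB detA_neq0.
have detB_neq0 : \det B != 0 by rewrite -detAB.
have [beta1 [delta1 cA]] := skew_sl_congruent_normal_form hchar sA gA detA_neq0.
have [beta2 [delta2 cB]] := skew_sl_congruent_normal_form hchar sB gB detB_neq0.
apply: congruent_trans (sl_congruent_congruent cA) _.
apply: congruent_trans (congruent_sym (sl_congruent_congruent cB)).
by apply: congruent_skew_normal_form; rewrite (det_sl_congruent cA) (det_sl_congruent cB).
Qed.
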